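(* If $n\xrightarrow{b|c} m$ is a transition of $\mathcal{D}_{p/q}$, then $$c=(b-(n+1)p)\bmod q\qquad\text{and}\qquad m=\left\lceil \frac{(n+1)p-b}{q}-1\right\rceil .$$
   Context: Let $p>q>1$ be coprime integers, $A_q=\{0,\dots,q-1\}$ and $B=\{p-(2q-1),\dots,p-1\}$. For $n\in\mathbb{N}$ and $a\in\mathbb{Z}$, let $\tau(n,a)=\frac{np+a}{q}$, defined only when $q$ divides $np+a$. For $a\in B$ let $\omega(a)=\{(b,c)\in A_q\times A_q : c-b=a-(p-q)\}$. The transducer $\mathcal{D}_{p/q}$ has state set $\mathbb{N}$, input and output alphabet $A_q$, and a transition $n\xrightarrow{b|c}\tau(n,a)$ (input $b$, output $c$) for every $n\in\mathbb{N}$, $a\in B$ with $\tau(n,a)$ defined, and $(b,c)\in\omega(a)$; no other transitions. Here $x\bmod q\in\{0,\dots,q-1\}$ is the remainder of Euclidean division, and $\lceil x\rceil$ is the integer $k$ with $k-1<x\le k$. *)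

From Stdlib Require Import ZArith QArith Qround.
Open Scope Z_scope.

(* States are naturals, represented as nonnegative integers. *)
Definition A_q (q x : Z) : Prop := 0 <= x < q.
Definition B (p q a : Z) : Prop := p - (2*q - 1) <= a <= p - 1.

(* tau(n,a) = (n p + a)/q, defined only if q | n p + a:  tau_rel p q n a m  <-> m = tau(n,a) *)
Definition tau_rel (p q n a m : Z) : Prop := q * m = n * p + a.

Definition omega (p q a b c : Z) : Prop :=
  A_q q b /\ A_q q c /\ c - b = a - (p - q).

Definition transition (p q n b c m : Z) : Prop :=
  0 <= n /\ 0 <= m /\ exists a, B p q a /\ tau_rel p q n a m /\ omega p q a b c.

From Stdlib Require Import ZArith QArith Qround Lia.

(* A transition n --b|c--> m through the digit a gives q m = n p + a and c - b = a - p + q,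
   hence (n + 1) p - b = q (m + 1) - c with 0 <= c < q: the output c is the remainder and
   m + 1 the ceiling of the Euclidean division of (n + 1) p - b by q. *)

Lemma transition_division (p q n b c m : Z) :
  transition p q n b c m -> ((n + 1) * p - b = q * (m + 1) - c /\ 0 <= c < q)%Z.
Proof.
  intros [_ [_ [a [_ [Htau [_ [Hc Hcb]]]]]]].
  unfold tau_rel in Htau; unfold A_q in Hc.
  split; lia.
Qed.

Lemma Qceiling_unique (x : Q) (k : Z) :
  inject_Z (k - 1)%Z < x -> x <= inject_Z k -> Qceiling x = k.
Proof.
  intros Hlt Hle.
  assert (Hlow : (k - 1 < Qceiling x)%Z).
  { rewrite Zlt_Qlt. apply (Qlt_le_trans _ x); [exact Hlt | apply Qle_ceiling]. }
  assert (Hup : (Qceiling x - 1 < k)%Z).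
  { rewrite Zlt_Qlt. apply (Qlt_le_trans _ x); [apply Qceiling_lt | exact Hle]. }
  lia.
Qed.

Lemma Qceiling_sub_remainder (q k c : Z) :
  (0 <= c < q)%Z -> Qceiling ((((q * k - c)%Z # Z.to_pos q) - 1)%Q) = (k - 1)%Z.
Proof.
  intros Hc.
  assert (Hq : Z.pos (Z.to_pos q) = q) by (apply Z2Pos.id; lia).
  apply Qceiling_unique; unfold Qlt, Qle; simpl; rewrite Pos.mul_1_r, Hq; nia.
Qed.

Theorem mainTheorem4 (p q : Z) (Hq : (1 < q)%Z) (Hpq : (q < p)%Z) (Hcop : Z.gcd p q = 1%Z)
  (n b c m : Z) :
  transition p q n b c m ->
  c = Z.modulo (b - (n + 1) * p)%Z q /\
  m = Qceiling ((((n + 1) * p - b)%Z # Z.to_pos q) - 1)%Q.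
Proof.
  intros Htr.
  destruct (transition_division _ _ _ _ _ _ Htr) as [Hdiv Hc].
  split.
  - apply Z.mod_unique_pos with (q := (- (m + 1))%Z); lia.
  - rewrite Hdiv, Qceiling_sub_remainder by exact Hc.
    lia.
Qed.
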